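(* Let $n\ge 3$ and $w(A,B)\in\mathbb F_2=\langle A,B\rangle$. For every $1\le i\le n-2$, $$\Big[Q_n^i,\big[M_n^{i+1},P_n^{i+2}\big]\Big]\le\operatorname{Ker}(\Theta_n^w),$$ where $Q_n^i=\langle t_{i,i+1},\,e_{i,i+1,i+2}\rangle$, $M_n^{i+1}=\langle t_{i+1,i+2},\,d_{i,i+1,i+2}\rangle$, $P_n^{i+2}=\langle t_{i,i+2}\rangle$ are subgroups of $FVB_n$, and for subgroups $H,K$, $[H,K]$ denotes the subgroup generated by all commutators $[h,k]=hkh^{-1}k^{-1}$, $h\in H$, $k\in K$.
   Context: For $n\ge 2$, the flat virtual braid group $FVB_n$ is the group with generators $\sigma_1,\dots,\sigma_{n-1},\rho_1,\dots,\rho_{n-1}$ and defining relations: $\sigma_i^2=1$, $\rho_i^2=1$ for $1\le i\le n-1$; $\sigma_i\sigma_{i+1}\sigma_i=\sigma_{i+1}\sigma_i\sigma_{i+1}$, $\rho_i\rho_{i+1}\rho_i=\rho_{i+1}\rho_i\rho_{i+1}$ and $\rho_i\rho_{i+1}\sigma_i=\sigma_{i+1}\rho_i\rho_{i+1}$ for $1\le i\le n-2$; $\sigma_i\sigma_j=\sigma_j\sigma_i$, $\rho_i\rho_j=\rho_j\rho_i$ and $\rho_i\sigma_j=\sigma_j\rho_i$ for $|i-j|\ge 2$. $\mathbb F_{2n}$ is the free group on $x_1,\dots,x_n,y_1,\dots,y_n$; automorphisms compose left to right, $(\varphi\psi)(f)=\psi(\varphi(f))$, so that $\Theta(\beta\gamma)(f)=\Theta(\gamma)(\Theta(\beta)(f))$;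 generators not mentioned are fixed. For $w(A,B)\in\mathbb F_2$, $\Theta_n^w\colon FVB_n\to\mathrm{Aut}(\mathbb F_{2n})$ is the homomorphism given by $\Theta_n^w(\sigma_i): x_i\mapsto x_{i+1}w(y_i,y_{i+1}),\ x_{i+1}\mapsto x_i w(y_i,y_{i+1})^{-1}$ and $\Theta_n^w(\rho_i): x_i\mapsto x_{i+1},\ x_{i+1}\mapsto x_i,\ y_i\mapsto y_{i+1},\ y_{i+1}\mapsto y_i$. In $FVB_n$ define $\lambda_{i,i+1}=\rho_i\sigma_i$ for $1\le i\le n-1$ and $\lambda_{i,j}=\rho_{j-1}\rho_{j-2}\cdots\rho_{i+1}\,\lambda_{i,i+1}\,\rho_{i+1}\cdots\rho_{j-2}\rho_{j-1}$ for $j-i\ge 2$. Define $t_{i,j}=\lambda_{i,j}^2$ ($1\le i<j\le n$), $d_{i,j,k}=\lambda_{j,k}^{-1}\lambda_{i,j}^{-1}\lambda_{j,k}\lambda_{i,k}$ and $e_{i,j,k}=\lambda_{j,k}^{-1}\lambda_{i,j}^{-1}\lambda_{i,k}\lambda_{i,j}$ ($1\le i<j<k\le n$). *)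

From mathcomp Require Import all_boot.
Set Implicit Arguments. Unset Strict Implicit. Unset Printing Implicit Defensive.

(* A letter is ((isY, k), inverted): x_k = ((false,k),false), y_k = ((true,k),false). *)
Definition letter := ((bool * nat) * bool)%type.
Definition Fx (k : nat) : letter := ((false, k), false).
Definition Fy (k : nat) : letter := ((true, k), false).
Definition linv (l : letter) : letter := (l.1, ~~ l.2).
Definition winv (u : seq letter) : seq letter := rev (map linv u).

Definition ccons (l : letter) (s : seq letter) : seq letter :=
  match s with
  | l' :: s' => if l' == linv l then s' else l :: s
  | [::] => [:: l]
  end.
Definition freduce (u : seq letter) : seq letter := foldr ccons [::] u.
Definition reduced (u : seq letter) : bool := freduce u == u.
Definition in_F2n (n : nat) (u : seq letter) : bool :=
  all (fun l => (1 <= l.1.2 <= n)%N) u.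

(* An endomorphism of the free group given by the images of the generators;
   applying it to a word = substitute and freely reduce. *)
Definition fapply (img : bool * nat -> seq letter) (u : seq letter) : seq letter :=
  freduce (flatten (map (fun l => if l.2 then winv (img l.1) else img l.1) u)).

(* a letter of F_2 = (isB, inverted); w is any word in A^{+-1}, B^{+-1} *)
Definition w_at (w : seq (bool * bool)) (a b : nat) : seq letter :=
  map (fun c => ((true, if c.1 then b else a), c.2)) w.

Inductive fvb_gen := Sig of nat | Rho of nat.

Definition theta_gen_img (w : seq (bool * bool)) (g : fvb_gen) : bool * nat -> seq letter :=
  match g with
  | Sig i => fun v =>
      if v == (false, i) then Fx i.+1 :: w_at w i i.+1
      else if v == (false, i.+1) then Fx i :: winv (w_at w i i.+1)
      else [:: (v, false)]
  | Rho i => fun v =>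
      if v == (false, i) then [:: Fx i.+1]
      else if v == (false, i.+1) then [:: Fx i]
      else if v == (true, i) then [:: Fy i.+1]
      else if v == (true, i.+1) then [:: Fy i]
      else [:: (v, false)]
  end.

(* Elements of FVB_n are represented by words in the generators (all generators
   are involutions in FVB_n, so inverses are not needed as letters). Product is
   concatenation, inverse is reversal. Theta(beta gamma) = Theta(beta) then
   Theta(gamma) (left-to-right composition). *)
Definition theta (w : seq (bool * bool)) (g : seq fvb_gen) (f : seq letter) : seq letter :=
  foldl (fun f s => fapply (theta_gen_img w s) f) f g.

Definition in_ker (n : nat) (w : seq (bool * bool)) (g : seq fvb_gen) : Prop :=
  forall f : seq letter, in_F2n n f -> reduced f -> theta w g f = f.

Definition ginv (g : seq fvb_gen) : seq fvb_gen := rev g.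

Definition lam (i j : nat) : seq fvb_gen :=
  let rhos := map Rho (iota i.+1 (j - i.+1)) in
  rev rhos ++ [:: Rho i; Sig i] ++ rhos.
Definition tt (i j : nat) : seq fvb_gen := lam i j ++ lam i j.
Definition dd (i j k : nat) : seq fvb_gen :=
  ginv (lam j k) ++ ginv (lam i j) ++ lam j k ++ lam i k.
Definition ee (i j k : nat) : seq fvb_gen :=
  ginv (lam j k) ++ ginv (lam i j) ++ lam i k ++ lam i j.

Inductive gen_by (S : seq fvb_gen -> Prop) : seq fvb_gen -> Prop :=
  | gen_base s : S s -> gen_by S s
  | gen_one : gen_by S [::]
  | gen_mul a b : gen_by S a -> gen_by S b -> gen_by S (a ++ b)
  | gen_inv a : gen_by S a -> gen_by S (ginv a).

Definition comm (h k : seq fvb_gen) : seq fvb_gen := h ++ k ++ ginv h ++ ginv k.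

Definition comm_sub (H K : seq fvb_gen -> Prop) : seq fvb_gen -> Prop :=
  gen_by (fun c => exists h k, H h /\ K k /\ c = comm h k).

Definition Qsub (i : nat) := gen_by (fun s => s = tt i i.+1 \/ s = ee i i.+1 i.+2).
Definition Msub (i : nat) := gen_by (fun s => s = tt i.+1 i.+2 \/ s = dd i i.+1 i.+2).
Definition Psub (i : nat) := gen_by (fun s => s = tt i i.+2).

From mathcomp Require Import all_boot zify.
Set Implicit Arguments. Unset Strict Implicit. Unset Printing Implicit Defensive.

(* Every generator of Q = <t_(i,i+1), e_(i,i+1,i+2)>, M = <t_(i+1,i+2),
   d_(i,i+1,i+2)> and P = <t_(i,i+2)> acts on F_2n as a triangular
   automorphism x_(i+k) |-> x_(i+k) u_k (k = 0, 1, 2) fixing the y's and the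
   other x's, the u_k being words in the y's.  These automorphisms form a group
   in which the three components compose independently, so a commutator has a
   trivial k-th component as soon as one of its factors has.  Elements of Q
   have u_2 = 1, of M have u_0 = 1, of P have u_1 = 1; hence [M, P] only moves
   x_(i+2) and [Q, [M, P]] acts trivially. *)

Fixpoint nored (s : seq letter) : bool :=
  match s with a :: ((b :: _) as t) => (b != linv a) && nored t | _ => true end.

Lemma linvK : involutive linv.
Proof. by case=> a b; rewrite /linv /= negbK. Qed.

Lemma winvK : involutive winv.
Proof. by move=> u; rewrite /winv map_rev revK -map_comp (eq_map linvK) map_id. Qed.

Lemma winv_cat u v : winv (u ++ v) = winv v ++ winv u.
Proof. by rewrite /winv map_cat rev_cat. Qed.

Lemma winv_cons l u : winv (l :: u) = winv u ++ [:: linv l].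
Proof. by rewrite /winv /= rev_cons cats1. Qed.

Lemma freduce_cons l u : freduce (l :: u) = ccons l (freduce u).
Proof. by []. Qed.

Lemma freduce_cat u v : freduce (u ++ v) = foldr ccons (freduce v) u.
Proof. by rewrite /freduce foldr_cat. Qed.

Lemma ccons_nored l s : nored s -> nored (ccons l s).
Proof.
case: s => [|b t] //= ns; case: ifP => bl; last by rewrite /= bl ns.
by case: t ns => [|c t] //= /andP[].
Qed.

Lemma foldr_nored s u : nored s -> nored (foldr ccons s u).
Proof. by move=> ns; elim: u => //= a u; apply: ccons_nored. Qed.

Lemma freduce_nored u : nored (freduce u).
Proof. exact: foldr_nored. Qed.

Lemma nored_freduce s : nored s -> freduce s = s.
Proof.
elim: s => [|a [|b t] IH] // /andP[ba nt].
by rewrite freduce_cons IH //= (negbTE ba).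
Qed.

Lemma freduceK u : freduce (freduce u) = freduce u.
Proof. exact/nored_freduce/freduce_nored. Qed.

Lemma ccons_cancel l s : nored s -> ccons l (ccons (linv l) s) = s.
Proof.
case: s => [|b t] /=; first by rewrite eqxx.
move=> ns; case: ifP => [/eqP|_]; last by rewrite /= eqxx.
rewrite linvK => lb; subst b; case: t ns => [|c t] //= /andP[cb _].
by rewrite (negbTE cb).
Qed.

Lemma foldr_freduce s u : nored s -> foldr ccons s (freduce u) = foldr ccons s u.
Proof.
move=> ns; elim: u => //= l u <-.
case: (freduce u) => [|b t] //=.
case: ifP => //= /eqP ->; rewrite ccons_cancel //; exact: foldr_nored.
Qed.

Lemma freduce_catl u v : freduce (freduce u ++ v) = freduce (u ++ v).
Proof. by rewrite !freduce_cat foldr_freduce // freduce_nored. Qed.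

Lemma freduce_catr u v : freduce (u ++ freduce v) = freduce (u ++ v).
Proof. by rewrite !freduce_cat freduceK. Qed.

Lemma foldr_winvr s u : nored s -> foldr ccons s (u ++ winv u) = s.
Proof.
elim: u s => //= l u IH s ns.
rewrite winv_cons catA foldr_cat /= IH; last exact: ccons_nored.
exact: ccons_cancel.
Qed.

Lemma freduce_winvr u v : freduce (u ++ winv u ++ v) = freduce v.
Proof. by rewrite catA freduce_cat foldr_winvr // freduce_nored. Qed.

Lemma freduce_winvl u v : freduce (winv u ++ u ++ v) = freduce v.
Proof. by rewrite -{2}(winvK u) freduce_winvr. Qed.

Lemma freduce_mulVw u : freduce (winv u ++ u) = [::].
Proof. by rewrite -[winv u ++ u]cats0 -catA freduce_winvl. Qed.

Lemma freduce_mulwV u : freduce (u ++ winv u) = [::].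
Proof. by rewrite -[u ++ winv u]cats0 -catA freduce_winvr. Qed.

Lemma foldr_cong s u v : nored s -> freduce u = freduce v ->
  foldr ccons s u = foldr ccons s v.
Proof. by move=> ns E; rewrite -foldr_freduce // E foldr_freduce. Qed.

Lemma freduce_cong_mid a b u v : freduce u = freduce v ->
  freduce (a ++ u ++ b) = freduce (a ++ v ++ b).
Proof.
move=> E; rewrite freduce_cat [in RHS]freduce_cat; congr (foldr _ _ a).
rewrite !freduce_cat; apply: foldr_cong => //; exact: freduce_nored.
Qed.

Lemma freduce_winv_cong u v : freduce u = freduce v ->
  freduce (winv u) = freduce (winv v).
Proof.
move=> E; transitivity (freduce (winv u ++ v ++ winv v)).
  by rewrite -freduce_catr freduce_mulwV cats0.
by rewrite -(freduce_cong_mid _ _ E) freduce_winvl.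
Qed.

Lemma all_freduce (P : pred letter) u : all P u -> all P (freduce u).
Proof.
elim: u => //= l u IH /andP[Pl /IH].
case: (freduce u) => [|b t] /=; first by rewrite Pl.
by case: ifP => _ /andP[] //= -> ->; rewrite Pl.
Qed.

(* Reduction commutes with substitution, so
   [fapply] is well defined on reduced words, composes like functions, and only
   depends on the images of the generators up to reduction. *)

Definition subst_letter (A : bool * nat -> seq letter) (l : letter) : seq letter :=
  if l.2 then winv (A l.1) else A l.1.
Definition subst A (u : seq letter) : seq letter := flatten (map (subst_letter A) u).

Lemma fapplyE A u : fapply A u = freduce (subst A u).
Proof. by []. Qed.

Lemma subst_cat A u v : subst A (u ++ v) = subst A u ++ subst A v.
Proof. by rewrite /subst map_cat flatten_cat. Qed.

Lemma subst_cons A l u : subst A (l :: u) = subst_letter A l ++ subst A u.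
Proof. by []. Qed.

Lemma subst_letter_pos A v : subst_letter A (v, false) = A v.
Proof. by []. Qed.

Lemma subst1 A v : subst A [:: (v, false)] = A v.
Proof. by rewrite /subst /= cats0. Qed.

Lemma subst1V A v : subst A [:: (v, true)] = winv (A v).
Proof. by rewrite /subst /= cats0. Qed.

Lemma subst_letter_linv A l : subst_letter A (linv l) = winv (subst_letter A l).
Proof. by case: l => a []; rewrite /subst_letter /linv /= ?winvK. Qed.

Lemma subst_winv A u : subst A (winv u) = winv (subst A u).
Proof.
elim: u => //= l u IH.
rewrite winv_cons subst_cat IH subst_cons winv_cat -subst_letter_linv.
by rewrite /subst /= cats0.
Qed.

Lemma subst_comp A B u : subst A (subst B u) = subst (fun v => subst A (B v)) u.
Proof.
elim: u => //= l u IH; rewrite !subst_cons subst_cat IH.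
by rewrite /subst_letter; case: l.2; rewrite ?subst_winv.
Qed.

Lemma subst_id u : subst (fun v => [:: (v, false)]) u = u.
Proof. by elim: u => //= [[a []]] u IH; rewrite subst_cons IH. Qed.

Lemma subst_freduce A u : freduce (subst A (freduce u)) = freduce (subst A u).
Proof.
suff foldr_subst s : nored s ->
    foldr ccons s (subst A (freduce u)) = foldr ccons s (subst A u) by exact: foldr_subst.
elim: u s => // l u IH s ns.
rewrite freduce_cons [in RHS]subst_cons foldr_cat -IH // -foldr_cat.
case: (freduce u) => [|b t]; first by rewrite /subst /= cats0.
rewrite [ccons l _]/=; case: ifP => [/eqP ->|_] //.
rewrite subst_cons subst_letter_linv catA foldr_cat foldr_winvr //.
exact: foldr_nored.
Qed.

Lemma fapply_freduce A u : fapply A (freduce u) = fapply A u.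
Proof. exact: subst_freduce. Qed.

Lemma fapply_cong A B u : (forall v, freduce (A v) = freduce (B v)) ->
  fapply A u = fapply B u.
Proof.
move=> AB; rewrite !fapplyE.
suff foldr_subst s : nored s ->
    foldr ccons s (subst A u) = foldr ccons s (subst B u) by exact: foldr_subst.
elim: u s => // l u IH s ns.
rewrite !subst_cons !foldr_cat IH //; apply: foldr_cong; first exact: foldr_nored.
by rewrite /subst_letter; case: l.2; [apply: freduce_winv_cong|].
Qed.

Lemma fapply_comp A B f :
  fapply A (fapply B f) = fapply (fun v => fapply A (B v)) f.
Proof.
rewrite !fapplyE subst_freduce subst_comp.
by apply: fapply_cong => v; rewrite freduceK.
Qed.

Lemma fapply_id u : fapply (fun v => [:: (v, false)]) u = freduce u.
Proof. by rewrite fapplyE subst_id. Qed.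

(* The action of the generators.  [theta w g] applies the images of the letters
   of g one after the other; each generator acts as an involution of the free
   group, hence [rev g] acts as the inverse of g. *)

Lemma theta_cat w a b f : theta w (a ++ b) f = theta w b (theta w a f).
Proof. by rewrite /theta foldl_cat. Qed.

Lemma theta_cons w s g f :
  theta w (s :: g) f = theta w g (fapply (theta_gen_img w s) f).
Proof. by []. Qed.

Lemma theta_freduce w g f : freduce (theta w g (freduce f)) = freduce (theta w g f).
Proof. by case: g => [|s g] /=; rewrite ?freduceK // fapply_freduce. Qed.

Lemma theta_reduced w g f : freduce f = f -> freduce (theta w g f) = theta w g f.
Proof. by elim: g f => //= s g IH f _; apply/IH/freduceK. Qed.

Lemma theta_fapply w g f :
  freduce (theta w g f) = fapply (fun v => freduce (theta w g [:: (v, false)])) f.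
Proof.
elim: g f => [|s g IH] f; first by rewrite -fapply_id; apply: fapply_cong.
rewrite theta_cons IH fapply_comp; apply: fapply_cong => v.
by rewrite theta_cons IH (fapplyE (theta_gen_img w s)) fapply_freduce subst1 fapplyE freduceK.
Qed.

(* The transposition of j and j+1, by which rho_j permutes indices. *)
Definition swp (j k : nat) : nat :=
  if k == j then j.+1 else if k == j.+1 then j else k.

Lemma swpK j : involutive (swp j).
Proof.
have jS : (j.+1 == j) = false by lia.
move=> k; have [->|kj] := eqVneq k j; first by rewrite /swp eqxx jS eqxx.
have [->|kj1] := eqVneq k j.+1; first by rewrite /swp jS eqxx eqxx.
by rewrite /swp (negbTE kj) (negbTE kj1) (negbTE kj) (negbTE kj1).
Qed.

Lemma swp_shift i j k : swp (i + j) (i + k) = i + swp j k.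
Proof. by rewrite /swp eqn_add2l -addnS eqn_add2l; case: (k == j); case: (k == j.+1). Qed.

Lemma rho_img w j v : theta_gen_img w (Rho j) v = [:: ((v.1, swp j v.2), false)].
Proof.
by case: v => [[] k] /=; rewrite /swp !xpair_eqE /=; case: (k == j); case: (k == j.+1).
Qed.

Lemma sig_img_y w j k : theta_gen_img w (Sig j) (true, k) = [:: ((true, k), false)].
Proof. by []. Qed.

Lemma sig_img_x w j : theta_gen_img w (Sig j) (false, j) = Fx j.+1 :: w_at w j j.+1.
Proof. by rewrite /= eqxx. Qed.

Lemma sig_img_xS w j :
  theta_gen_img w (Sig j) (false, j.+1) = Fx j :: winv (w_at w j j.+1).
Proof. by rewrite /= xpair_eqE /= eqxx (_ : (j.+1 == j) = false) //; lia. Qed.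

Lemma sig_img_other w j k : k != j -> k != j.+1 ->
  theta_gen_img w (Sig j) (false, k) = [:: ((false, k), false)].
Proof. by move=> kj kj1; rewrite /= !xpair_eqE /= (negbTE kj) (negbTE kj1). Qed.

Arguments theta_gen_img : simpl never.

Lemma subst_w_fix A w a b : (forall k, A (true, k) = [:: ((true, k), false)]) ->
  subst A (w_at w a b) = w_at w a b.
Proof.
move=> Ay; elim: w => //= c w IH.
by rewrite subst_cons IH /subst_letter /= Ay; case: c => c1 [].
Qed.

Lemma subst_w_rho w' j w a b :
  subst (theta_gen_img w' (Rho j)) (w_at w a b) = w_at w (swp j a) (swp j b).
Proof.
elim: w => // c w IH; rewrite [w_at _ _ _]/= subst_cons IH /subst_letter rho_img.
by case: c => [[] []].
Qed.

Lemma gen_invol w s f :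
  fapply (theta_gen_img w s) (fapply (theta_gen_img w s) f) = freduce f.
Proof.
rewrite fapply_comp -fapply_id; apply: fapply_cong => v; rewrite fapplyE freduceK.
case: s => j; last by rewrite rho_img subst1 rho_img /= swpK; case: v.
case: v => [[] k]; first by rewrite sig_img_y subst1 sig_img_y.
have [->|kj] := eqVneq k j.
  rewrite sig_img_x subst_cons subst_w_fix // subst_letter_pos sig_img_xS.
  by rewrite cat_cons freduce_cons freduce_mulVw.
have [->|kj1] := eqVneq k j.+1.
  rewrite sig_img_xS subst_cons subst_winv subst_w_fix // subst_letter_pos sig_img_x.
  by rewrite cat_cons freduce_cons freduce_mulwV.
by rewrite sig_img_other // subst1 sig_img_other.
Qed.

Lemma theta_rev w g f : freduce (theta w (rev g) (theta w g f)) = freduce f.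
Proof.
elim: g f => [|s g IH] f //.
rewrite rev_cons -cats1 theta_cat /= -fapply_freduce IH fapply_freduce.
by rewrite gen_invol freduceK.
Qed.

(* Composing [tri u] then [tri v] gives
   [tri (v k * u k)], so these maps form a group isomorphic to a power of the
   free group on the y's, in which the three components do not interact. *)

Definition isY (u : seq letter) : bool := all (fun l : letter => l.1.1) u.

Lemma isY_cat u v : isY u -> isY v -> isY (u ++ v).
Proof. by rewrite /isY all_cat => -> ->. Qed.

Lemma isY_winv u : isY u -> isY (winv u).
Proof. by rewrite /isY /winv all_rev all_map. Qed.

Lemma isY_freduce u : isY u -> isY (freduce u).
Proof. exact: all_freduce. Qed.

Section Triangular.
Variables (w : seq (bool * bool)) (i : nat).

Definition tri (u : nat -> seq letter) (v : bool * nat) : seq letter :=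
  if ~~ v.1 && (i <= v.2 < i + 3) then Fx v.2 :: u (v.2 - i) else [:: (v, false)].

Lemma tri_x u k : k < 3 -> tri u (false, i + k) = Fx (i + k) :: u k.
Proof. by move=> k3; rewrite /tri /= leq_addr ltn_add2l k3 addKn. Qed.

Lemma tri_spec v :
  (exists2 k, k < 3 & v = (false, i + k)) \/ (forall u, tri u v = [:: (v, false)]).
Proof.
case: v => [b k]; rewrite /tri /=.
case: (boolP [&& ~~ b, i <= k & k < i + 3]) => [/and3P[/negPf -> ik ki3]|_].
  by left; exists (k - i); [lia | congr pair; lia].
by right.
Qed.

Lemma subst_tri_y u f : isY f -> subst (tri u) f = f.
Proof.
elim: f => // [[[[] k] s]] f IH //= /IH {}IH.
by rewrite subst_cons IH /subst_letter /tri /=; case: s.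
Qed.

Lemma tri_comp u v f : (forall k, k < 3 -> isY (u k)) ->
  fapply (tri v) (fapply (tri u) f) = fapply (tri (fun k => freduce (v k ++ u k))) f.
Proof.
move=> yu; rewrite fapply_comp; apply: fapply_cong => x.
case: (tri_spec x) => [[k k3 ->]|fixed]; last by rewrite !fixed fapplyE subst1 fixed.
rewrite !tri_x // fapplyE freduceK subst_cons subst_letter_pos tri_x //.
by rewrite subst_tri_y ?yu // cat_cons !freduce_cons freduceK.
Qed.

Lemma tri1 f : fapply (tri (fun=> [::])) f = freduce f.
Proof.
rewrite -fapply_id; apply: fapply_cong => x.
by case: (tri_spec x) => [[k k3 ->]|->]; rewrite ?tri_x.
Qed.

Lemma tri_ext u v f : (forall k, k < 3 -> freduce (u k) = freduce (v k)) ->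
  fapply (tri u) f = fapply (tri v) f.
Proof.
move=> uv; apply: fapply_cong => x.
by case: (tri_spec x) => [[k k3 ->]|fixed]; rewrite ?fixed // !tri_x // !freduce_cons uv.
Qed.

Definition acts (g : seq fvb_gen) (u : nat -> seq letter) : Prop :=
  (forall k, k < 3 -> isY (u k)) /\ forall f, freduce (theta w g f) = fapply (tri u) f.

Lemma acts_nil : acts [::] (fun=> [::]).
Proof. by split => // f; rewrite tri1. Qed.

Lemma acts_cat a b u v : acts a u -> acts b v ->
  acts (a ++ b) (fun k => freduce (v k ++ u k)).
Proof.
case=> yu Ha [yv Hb]; split => [k k3|f]; first by rewrite isY_freduce ?isY_cat ?yu ?yv.
by rewrite theta_cat -theta_freduce Ha Hb tri_comp.
Qed.

Lemma acts_rev g u : acts g u -> acts (rev g) (fun k => freduce (winv (u k))).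
Proof.
case=> yu Hg; have yu' k : k < 3 -> isY (freduce (winv (u k))).
  by move=> k3; rewrite isY_freduce ?isY_winv ?yu.
split=> // f; set h := fapply (tri _) f.
have Hh : fapply (tri u) h = freduce f.
  by rewrite /h tri_comp // -tri1; apply: tri_ext => k _; rewrite freduce_catr freduce_mulwV.
by rewrite -theta_freduce -Hh -Hg theta_freduce theta_rev /h freduceK.
Qed.

(* The component of a commutator [g, h] = g h g^-1 h^-1 in terms of those of
   g and h; it is trivial as soon as one of them is. *)
Definition commc (u v : seq letter) : seq letter :=
  freduce (freduce (freduce (freduce (winv v) ++ freduce (winv u)) ++ v) ++ u).

Lemma commc1w v : commc [::] v = [::].
Proof. by rewrite /commc cats0 !freduceK !freduce_catl cats0 freduce_catl freduce_mulVw. Qed.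

Lemma commcw1 u : commc u [::] = [::].
Proof. by rewrite /commc /= cats0 !freduceK freduce_catl freduce_mulVw. Qed.

Lemma acts_comm g h u v : acts g u -> acts h v ->
  acts (comm g h) (fun k => commc (u k) (v k)).
Proof.
move=> Hg Hh.
exact: (acts_cat Hg (acts_cat Hh (acts_cat (acts_rev Hg) (acts_rev Hh)))).
Qed.

Definition supported (S : pred nat) (g : seq fvb_gen) : Prop :=
  exists2 u, acts g u & forall k, k < 3 -> ~~ S k -> u k = [::].

Lemma supported_gen (P : seq fvb_gen -> Prop) S :
  (forall s, P s -> supported S s) -> forall g, gen_by P g -> supported S g.
Proof.
move=> HP g; elim=> {g} [s /HP //| |a b _ [u Ha Su] _ [v Hb Sv]|a _ [u Ha Su]].
- by exists (fun=> [::]); first exact: acts_nil.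
- by exists (fun k => freduce (v k ++ u k)) => [|k k3 nS]; [exact: acts_cat|rewrite Su ?Sv].
- by exists (fun k => freduce (winv (u k))) => [|k k3 nS]; [exact: acts_rev|rewrite Su].
Qed.

Lemma supported_comm S1 S2 g h : supported S1 g -> supported S2 h ->
  supported (predI S1 S2) (comm g h).
Proof.
move=> [u Hg Su] [v Hh Sv]; exists (fun k => commc (u k) (v k)); first exact: acts_comm.
move=> k k3 /=; case S1k: (S1 k) => /= nS2; first by rewrite Sv // commcw1.
by rewrite Su ?S1k // commc1w.
Qed.

Lemma supported_ker n S g :
  (forall k, k < 3 -> ~~ S k) -> supported S g -> in_ker n w g.
Proof.
move=> noS [u [_ Hg] Su] f _ /eqP rf.
by rewrite -theta_reduced // Hg -[RHS]rf -tri1; apply: tri_ext => k k3; rewrite Su ?noS.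
Qed.

End Triangular.

(* A symbolic model of the action of the generators sigma_(i+j), rho_(i+j)
   (j <= 1) on the window.  Abstract letters are x_k (k < 3), a letter
   W_(a,b) coding w(y_(i+a), y_(i+b)) (code a*3+b < 9) and y_k (code 9+k);
   [ev] expands an abstract letter into the concrete word it stands for.  The
   abstract action [absimg] commutes with [ev], so the action of a concrete
   word in these generators can be computed by evaluation in the model,
   uniformly in w and i. *)

Definition shiftg (i : nat) (s : fvb_gen) : fvb_gen :=
  match s with Sig j => Sig (i + j) | Rho j => Rho (i + j) end.

Definition gidx (s : fvb_gen) : nat := match s with Sig j => j | Rho j => j end.

Definition wcode (a b : nat) : nat := a * 3 + b.

Lemma wcode_div a b : b < 3 -> wcode a b %/ 3 = a.
Proof. rewrite /wcode; lia. Qed.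

Lemma wcode_mod a b : b < 3 -> wcode a b %% 3 = b.
Proof. rewrite /wcode; lia. Qed.

Definition absimg (s : fvb_gen) (v : bool * nat) : seq letter :=
  match s with
  | Sig j => match v with
     | (false, k) =>
         if k == j then [:: ((false, j.+1), false); ((true, wcode j j.+1), false)]
         else if k == j.+1 then [:: ((false, j), false); ((true, wcode j j.+1), true)]
         else [:: (v, false)]
     | (true, _) => [:: (v, false)] end
  | Rho j => match v with
     | (false, k) => [:: ((false, swp j k), false)]
     | (true, c) =>
         if c < 9 then [:: ((true, wcode (swp j (c %/ 3)) (swp j (c %% 3))), false)]
         else [:: ((true, 9 + swp j (c - 9)), false)] end
  end.

Definition thetaA (gs : seq fvb_gen) (u : seq letter) : seq letter :=
  foldl (fun f s => fapply (absimg s) f) u gs.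

Lemma swp_lt3 j a : j <= 1 -> a < 3 -> swp j a < 3.
Proof. by case: j => [|[|]] //; case: a => [|[|[|]]]. Qed.

Definition imgA (gs : seq fvb_gen) (k : nat) : seq letter :=
  thetaA gs [:: ((false, k), false)].

(* Decidable certificate that a word in the window generators acts
   triangularly: in the model, x_k (k < 3) goes to x_k followed by y-letters
   and y_k (k < 3) is fixed. *)
Definition triangularA (gs : seq fvb_gen) : bool :=
  [&& all (fun s => gidx s <= 1) gs,
      all (fun k => imgA gs k == ((false, k), false) :: behead (imgA gs k)) (iota 0 3),
      all (fun k => isY (behead (imgA gs k))) (iota 0 3) &
      all (fun k => thetaA gs [:: ((true, 9 + k), false)] == [:: ((true, 9 + k), false)])
          (iota 0 3)].

Section SymbolicModel.
Variables (w : seq (bool * bool)) (i : nat).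

Definition ev (v : bool * nat) : seq letter :=
  match v with
  | (false, k) => [:: Fx (i + k)]
  | (true, c) => if c < 9 then w_at w (i + c %/ 3) (i + c %% 3) else [:: Fy (i + (c - 9))]
  end.

Lemma gen_ev s v : gidx s <= 1 ->
  freduce (subst (theta_gen_img w (shiftg i s)) (ev v)) = freduce (subst ev (absimg s v)).
Proof.
case: s => j /= j1.
- case: v => [[] c].
  + rewrite subst1 /ev; case: ifP => _; first by rewrite subst_w_fix.
    by rewrite /Fy subst1 sig_img_y.
  + rewrite /ev /Fx subst1 /absimg.
    have [->|cj] := eqVneq c j.
      rewrite sig_img_x subst_cons subst1 /subst_letter /=.
      by case: j j1 => [|[|]] //= _; rewrite wcode_div // wcode_mod // ?addn0 ?addn1 ?addn2.
    have [->|cj1] := eqVneq c j.+1.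
      rewrite addnS sig_img_xS subst_cons.
      by case: j j1 {cj} => [|[|]] //= _;
        rewrite subst1V /= wcode_div // wcode_mod // ?addn0 ?addn1 ?addn2.
    rewrite (@sig_img_other w (i + j) (i + c)); last 2 first.
    - by rewrite eqn_add2l.
    - by rewrite -addnS eqn_add2l.
    by rewrite subst1.
- case: v => [[] c] /=.
  + case: ifP => c9.
      rewrite subst_w_rho !swp_shift subst1 /=.
      have a3 : swp j (c %/ 3) < 3 by apply: swp_lt3 => //; lia.
      have b3 : swp j (c %% 3) < 3 by apply: swp_lt3 => //; lia.
      rewrite (_ : wcode _ _ < 9); last by rewrite /wcode; lia.
      by rewrite wcode_div // wcode_mod.
    by rewrite !subst1 rho_img /= swp_shift addKn.
  + by rewrite /Fx subst1 rho_img /= swp_shift.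
Qed.

Lemma theta_ev gs u : all (fun s => gidx s <= 1) gs ->
  freduce (theta w (map (shiftg i) gs) (subst ev u)) = fapply ev (thetaA gs u).
Proof.
elim: gs u => // s gs IH u /andP[s1 gs1].
rewrite map_cons theta_cons -theta_freduce -IH // -[RHS]theta_freduce.
congr (freduce (theta _ _ _)).
rewrite !fapplyE subst_comp subst_freduce subst_comp freduceK.
by apply: fapply_cong => v; exact: gen_ev.
Qed.

Lemma gen_fix_out s b k : gidx s <= 1 -> ~~ (i <= k < i + 3) ->
  theta_gen_img w (shiftg i s) (b, k) = [:: ((b, k), false)].
Proof.
move=> s1 out; have kj : k != i + gidx s by apply/eqP; lia.
have kj1 : k != (i + gidx s).+1 by apply/eqP; lia.
case: s s1 kj kj1 => j /= _ kj kj1; first by case: b; rewrite ?sig_img_y ?sig_img_other.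
by rewrite rho_img /swp /= (negbTE kj) (negbTE kj1).
Qed.

Lemma theta_fix_out gs b k : all (fun s => gidx s <= 1) gs -> ~~ (i <= k < i + 3) ->
  theta w (map (shiftg i) gs) [:: ((b, k), false)] = [:: ((b, k), false)].
Proof.
move=> gs1 out; elim: gs gs1 => // s gs IH /andP[s1 gs1].
by rewrite map_cons theta_cons fapplyE subst1 gen_fix_out // IH.
Qed.

Lemma isY_ev u : isY u -> isY (subst ev u).
Proof.
elim: u => // [[[b c] s]] u IH /= /andP[yb /IH yu]; rewrite subst_cons isY_cat //.
case: b yb => // _; have yev : isY (ev (true, c)).
  rewrite /ev /=; case: ifP => _ //.
  by rewrite /isY /w_at all_map; apply/allP => x.
by rewrite /subst_letter /=; case: s => //; apply: isY_winv.
Qed.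

Lemma triangularA_acts gs : triangularA gs ->
  acts w i (map (shiftg i) gs) (fun k => subst ev (behead (imgA gs k))).
Proof.
case/and4P=> gs1 /allP headx /allP ytail /allP fixy.
split=> [k k3|f]; first by rewrite isY_ev // ytail // mem_iota.
rewrite theta_fapply; apply: fapply_cong => -[b k]; rewrite freduceK.
have [[k' k3 ->]|out] : (exists2 k', k' < 3 & k = i + k') \/ ~~ (i <= k < i + 3).
- by case: (boolP (i <= k < i + 3)) => [/andP[ik ki3]|]; [left; exists (k - i); lia|right].
- case: b.
    have -> : [:: ((true, i + k'), false)] = subst ev [:: ((true, 9 + k'), false)].
      by rewrite subst1 /= addKn.
    by rewrite theta_ev // (eqP (fixy _ _)) ?mem_iota // fapplyE subst1 /= addKn.
  have -> : [:: ((false, i + k'), false)] = subst ev [:: ((false, k'), false)] by [].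
  by rewrite tri_x // theta_ev // -/(imgA gs k') (eqP (headx _ _)) ?mem_iota.
- by rewrite theta_fix_out // /tri /= (negbTE out) andbF.
Qed.

End SymbolicModel.

Definition certified (S : pred nat) (gs : seq fvb_gen) : bool :=
  triangularA gs && all (fun k => S k || nilp (behead (imgA gs k))) (iota 0 3).

Lemma certified_supported w i S gs : certified S gs -> supported w i S (map (shiftg i) gs).
Proof.
case/andP=> tri_gs /allP supp; exists (fun k => subst (ev w i) (behead (imgA gs k))).
  exact: triangularA_acts.
move=> k k3 nSk; have := supp k; rewrite mem_iota (negbTE nSk) /= => /(_ k3).
by move/nilP ->.
Qed.

Definition lam01 : seq fvb_gen := [:: Rho 0; Sig 0].
Definition lam12 : seq fvb_gen := [:: Rho 1; Sig 1].
Definition lam02 : seq fvb_gen := [:: Rho 1; Rho 0; Sig 0; Rho 1].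

Lemma lam01E i : lam i i.+1 = map (shiftg i) lam01.
Proof. by rewrite /lam subnn /= addn0. Qed.

Lemma lam12E i : lam i.+1 i.+2 = map (shiftg i) lam12.
Proof. by rewrite /lam subnn /= addn1. Qed.

Lemma lam02E i : lam i i.+2 = map (shiftg i) lam02.
Proof. by rewrite /lam subSS subSnn /= addn0 addn1. Qed.

Lemma Qsub_supported w i h : Qsub i h -> supported w i (pred2 0 1) h.
Proof.
apply: supported_gen => _ [->|->].
  by rewrite /tt lam01E -map_cat; apply: certified_supported; vm_compute.
rewrite /ee /ginv lam12E lam02E lam01E -!map_rev -!map_cat.
by apply: certified_supported; vm_compute.
Qed.

Lemma Msub_supported w i h : Msub i h -> supported w i (pred2 1 2) h.
Proof.
apply: supported_gen => _ [->|->].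
  by rewrite /tt lam12E -map_cat; apply: certified_supported; vm_compute.
rewrite /dd /ginv lam12E lam02E lam01E -!map_rev -!map_cat.
by apply: certified_supported; vm_compute.
Qed.

Lemma Psub_supported w i h : Psub i h -> supported w i (pred2 0 2) h.
Proof.
apply: supported_gen => _ ->.
by rewrite /tt lam02E -map_cat; apply: certified_supported; vm_compute.
Qed.

Theorem lemma4p1 (n : nat) (w : seq (bool * bool)) (i : nat) :
  (3 <= n)%N -> (1 <= i <= n - 2)%N ->
  forall g : seq fvb_gen,
    comm_sub (Qsub i) (comm_sub (Msub i) (Psub i)) g -> in_ker n w g.
Proof.
move=> _ _ g Hg.
apply: (@supported_ker w i n (predI (pred2 0 1) (predI (pred2 1 2) (pred2 0 2)))).
  by case=> [|[|[|]]].
move: g Hg; apply: supported_gen => _ [h [k [Qh [MPk ->]]]].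
apply: supported_comm (Qsub_supported w Qh) _.
move: k MPk; apply: supported_gen => _ [m [p [Mm [Pp ->]]]].
exact: supported_comm (Msub_supported w Mm) (Psub_supported w Pp).
Qed.
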